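(* Let $H_1,H_2$ be Hopf algebras over $\mathbb{C}$ forming a matched pair, with left action $\triangleright:H_2\otimes H_1\to H_1$ and right action $\triangleleft:H_2\otimes H_1\to H_2$, and let $H=H_1\bowtie H_2$ be the associated double cross product Hopf algebra. Let $H_1'$ be a Hopf algebra nondegenerately dually paired with $H_1$ by $\langle\ ,\ \rangle$, and assume that the right action $\triangleleft$ of $H_1$ on $H_2$ is dual to a left coaction $a\mapsto a_{(0)}\otimes a_{(1)}\in H_1'\otimes H_2$, i.e. $a\triangleleft h=\langle a_{(0)},h\rangle a_{(1)}$ for all $a\in H_2$, $h\in H_1$, so that the bicrossproduct Hopf algebra $H_2{\triangleright\!\!\!\blacktriangleleft} H_1'$ is defined. Consider the two algebras built on the vector space $H_1\otimes H_2\otimes H_1'$: (i) $A_1=(H_1\bowtie H_2){\triangleright\!\!\!<} H_1'$, the cross product of $H_1\bowtie H_2$ by its right action on $H_1'$ given by $\phi\triangleleft(h\otimes a)=\langle\phi_{(1)},h\rangle\,\phi_{(2)}\triangleleft a$, where $\langle\phi\triangleleft a,h\rangle=\langle\phi,a\triangleright h\rangle$; its product is $(x\otimes\phi)(y\otimes\psi)=xy_{(1)}\otimes(\phi\triangleleft y_{(2)})\psi$ for $x,y\in H_1\bowtie H_2$, $\phi,\psi\in H_1'$; (ii) $A_2=H_1{>\!\!\!\triangleleft}(H_2{\triangleright\!\!\!\blacktriangleleft} H_1')$, the cross product of $H_2{\triangleright\!\!\!\blacktriangleleft} H_1'$ by its left action on $H_1$ given by $(a\otimes\phi)\triangleright h=(a\triangleright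 h_{(1)})\langle\phi,h_{(2)}\rangle$; its product is $(h\otimes X)(g\otimes Y)=h(X_{(1)}\triangleright g)\otimes X_{(2)}Y$ for $h,g\in H_1$, $X,Y\in H_2{\triangleright\!\!\!\blacktriangleleft} H_1'$. Then the products of $A_1$ and $A_2$ on $H_1\otimes H_2\otimes H_1'$ coincide, so there is a single algebra $A=(H_1\bowtie H_2){\triangleright\!\!\!<} H_1'=H_1{>\!\!\!\triangleleft}(H_2{\triangleright\!\!\!\blacktriangleleft} H_1')$. It contains $H_1\bowtie H_2$ (as the elements $h\otimes a\otimes 1$) and $H_2{\triangleright\!\!\!\blacktriangleleft} H_1'$ (as the elements $1\otimes a\otimes\phi$) as subalgebras, and it also contains the Heisenberg–Weyl algebra $H_1{\triangleright\!\!\!<} H_1'=H_1{>\!\!\!\triangleleft} H_1'$ (the elements $h\otimes 1\otimes\phi$, with product $(h\otimes\phi)(g\otimes\psi)=hg_{(1)}\otimes\langle\phi_{(1)},g_{(2)}\rangle\phi_{(2)}\psi$).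
   Context: Sweedler notation $\Delta h=h_{(1)}\otimes h_{(2)}$ is used. A matched pair means the actions satisfy the conditions making the following a Hopf algebra: the double cross product $H_1\bowtie H_2$ is the vector space $H_1\otimes H_2$ with product $(h\otimes a)(g\otimes b)=h(a_{(1)}\triangleright g_{(1)})\otimes(a_{(2)}\triangleleft g_{(2)})b$, tensor product coproduct, and $H_1,H_2$ embedded as subalgebras $h\otimes1$, $1\otimes a$. The bicrossproduct $H_2{\triangleright\!\!\!\blacktriangleleft} H_1'$ is the vector space $H_2\otimes H_1'$ with product $(a\otimes\phi)(b\otimes\psi)=ab_{(1)}\otimes(\phi\triangleleft b_{(2)})\psi$ and coproduct $\Delta(a\otimes\phi)=(a_{(1)}\otimes a_{(2)(0)}\phi_{(1)})\otimes(a_{(2)(1)}\otimes\phi_{(2)})$, where $\phi\triangleleft b$ is the right action of $H_2$ on $H_1'$ defined by $\langle\phi\triangleleft b,h\rangle=\langle\phi,b\triangleright h\rangle$. *)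

(* Elements of tensor products are represented by finite lists of pure
   tensors (formal sums  sum_i u_i (x) v_i (x) ... ); two such lists denote
   the same element of the tensor product iff every multilinear form with
   values in the ground field takes the same value on them (the linear forms
   on a vector space separate its points).  Coproducts, coactions, etc. are
   given by a chosen list representation of their value. *)
From HB Require Import structures.
From mathcomp Require Import all_boot all_order all_algebra.
From mathcomp Require Import complex reals.
Set Implicit Arguments. Unset Strict Implicit. Unset Printing Implicit Defensive.
Import GRing.Theory.
Local Open Scope ring_scope.

Section HopfDefs.
Variable K : fieldType.

Definition linform (V : lmodType K) (f : V -> K) : Prop :=
  forall (c : K) (u v : V), f (c *: u + v) = c * f u + f v.

Definition linmap (U V : lmodType K) (f : U -> V) : Prop :=
  forall (c : K) (u v : U), f (c *: u + v) = c *: f u + f v.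

Definition bilinform (U V : lmodType K) (f : U -> V -> K) : Prop :=
  (forall v, linform (fun u => f u v)) /\ (forall u, linform (f u)).

Definition trilinform (U V W : lmodType K) (f : U -> V -> W -> K) : Prop :=
  [/\ forall v w, linform (fun u => f u v w),
      forall u w, linform (fun v => f u v w) &
      forall u v, linform (f u v)].

(* s, t : seq (U * V) stand for sum_i s_i.1 (x) s_i.2 in U (x) V. *)
Definition teq2 (U V : lmodType K) (s t : seq (U * V)) : Prop :=
  forall f : U -> V -> K, bilinform f ->
    \sum_(p <- s) f p.1 p.2 = \sum_(p <- t) f p.1 p.2.

(* triples ((u, v), w) stand for u (x) v (x) w in U (x) V (x) W. *)
Definition teq3 (U V W : lmodType K) (s t : seq (U * V * W)) : Prop :=
  forall f : U -> V -> W -> K, trilinform f ->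
    \sum_(p <- s) f p.1.1 p.1.2 p.2 = \sum_(p <- t) f p.1.1 p.1.2 p.2.

Definition tscale (U V : lmodType K) (c : K) (s : seq (U * V)) :=
  [seq (c *: p.1, p.2) | p <- s].

Record hopf_data (H : Type) := HopfData {
  cop : H -> seq (H * H);
  cou : H -> K;
  antip : H -> H }.

Record is_hopf (H : algType K) (D : hopf_data H) : Prop := IsHopf {
  cop_lin : forall c x y,
      teq2 (cop D (c *: x + y)) (tscale c (cop D x) ++ cop D y);
  cou_lin : linform (cou D);
  antip_lin : linmap (antip D);
  coassoc : forall x,
      teq3 [seq (p.1, q.1, q.2) | p <- cop D x, q <- cop D p.2]
           [seq (q.1, q.2, p.2) | p <- cop D x, q <- cop D p.1];
  counitl : forall x, \sum_(p <- cop D x) cou D p.1 *: p.2 = x;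
  counitr : forall x, \sum_(p <- cop D x) cou D p.2 *: p.1 = x;
  cop_mul : forall x y,
      teq2 (cop D (x * y)) [seq (p.1 * q.1, p.2 * q.2) | p <- cop D x, q <- cop D y];
  cop_one : teq2 (cop D 1) [:: (1, 1)];
  cou_mul : forall x y, cou D (x * y) = cou D x * cou D y;
  cou_one : cou D 1 = 1;
  antipl : forall x, \sum_(p <- cop D x) antip D p.1 * p.2 = cou D x *: 1;
  antipr : forall x, \sum_(p <- cop D x) p.1 * antip D p.2 = cou D x *: 1 }.

Section MatchedPair.
Variables (H1 H2 : algType K) (D1 : hopf_data H1) (D2 : hopf_data H2).
Variables (lt : H2 -> H1 -> H1) (rt : H2 -> H1 -> H2).

Record matched_pair : Prop := MatchedPair {
  lt_linl : forall h, linmap (fun a => lt a h);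
  lt_linr : forall a, linmap (lt a);
  lt_mul : forall a b h, lt (a * b) h = lt a (lt b h);
  lt_one : forall h, lt 1 h = h;
  lt_cop : forall a h, teq2 (cop D1 (lt a h))
             [seq (lt p.1 q.1, lt p.2 q.2) | p <- cop D2 a, q <- cop D1 h];
  lt_cou : forall a h, cou D1 (lt a h) = cou D2 a * cou D1 h;
  rt_linl : forall h, linmap (fun a => rt a h);
  rt_linr : forall a, linmap (rt a);
  rt_mul : forall a g h, rt a (g * h) = rt (rt a g) h;
  rt_one : forall a, rt a 1 = a;
  rt_cop : forall a h, teq2 (cop D2 (rt a h))
             [seq (rt p.1 q.1, rt p.2 q.2) | p <- cop D2 a, q <- cop D1 h];
  rt_cou : forall a h, cou D2 (rt a h) = cou D2 a * cou D1 h;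
  mp_lt_mul : forall a g h,
      lt a (g * h) = \sum_(p <- cop D2 a) \sum_(q <- cop D1 g)
                       lt p.1 q.1 * lt (rt p.2 q.2) h;
  mp_lt_one : forall a, lt a 1 = cou D2 a *: 1;
  mp_rt_mul : forall a b g,
      rt (a * b) g = \sum_(p <- cop D2 b) \sum_(q <- cop D1 g)
                       rt a (lt p.1 q.1) * rt p.2 q.2;
  mp_rt_one : forall g, rt 1 g = cou D1 g *: 1;
  mp_cocomm : forall a g,
      teq2 [seq (rt p.1 q.1, lt p.2 q.2) | p <- cop D2 a, q <- cop D1 g]
           [seq (rt p.2 q.2, lt p.1 q.1) | p <- cop D2 a, q <- cop D1 g] }.

Definition dcp_mul (x y : H1 * H2) : seq (H1 * H2) :=
  [seq (x.1 * lt p.1 q.1, rt p.2 q.2 * y.2) | p <- cop D2 x.2, q <- cop D1 y.1].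

Definition dcp_cop (x : H1 * H2) : seq ((H1 * H2) * (H1 * H2)) :=
  [seq ((p.1, q.1), (p.2, q.2)) | p <- cop D1 x.1, q <- cop D2 x.2].
End MatchedPair.

Section Pairing.
Variables (H1 H1' : algType K) (D1 : hopf_data H1) (D1' : hopf_data H1').
Variable pr : H1' -> H1 -> K.

Record hopf_pairing : Prop := HopfPairing {
  pr_bilin : bilinform pr;
  pr_mull : forall phi psi h,
      pr (phi * psi) h = \sum_(p <- cop D1 h) pr phi p.1 * pr psi p.2;
  pr_onel : forall h, pr 1 h = cou D1 h;
  pr_mulr : forall phi g h,
      pr phi (g * h) = \sum_(p <- cop D1' phi) pr p.1 g * pr p.2 h;
  pr_oner : forall phi, pr phi 1 = cou D1' phi;
  pr_antip : forall phi h, pr (antip D1' phi) h = pr phi (antip D1 h) }.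

Definition nondeg_pairing : Prop :=
  (forall phi, (forall h, pr phi h = 0) -> phi = 0) /\
  (forall h, (forall phi, pr phi h = 0) -> h = 0).
End Pairing.

Section Coaction.
Variables (H1' H2 : algType K) (D1' : hopf_data H1').
Variable beta : H2 -> seq (H1' * H2).

Record left_coaction : Prop := LeftCoaction {
  beta_lin : forall c a b, teq2 (beta (c *: a + b)) (tscale c (beta a) ++ beta b);
  beta_coassoc : forall a,
      teq3 [seq (p.1, q.1, q.2) | p <- beta a, q <- beta p.2]
           [seq (q.1, q.2, p.2) | p <- beta a, q <- cop D1' p.1];
  beta_counit : forall a, \sum_(p <- beta a) cou D1' p.1 *: p.2 = a }.
End Coaction.

Section Constructions.
Variables (H1 H2 H1' : algType K).
Variables (D1 : hopf_data H1) (D2 : hopf_data H2) (D1' : hopf_data H1').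
Variables (lt : H2 -> H1 -> H1) (rt : H2 -> H1 -> H2).
Variable pr : H1' -> H1 -> K.
Variable beta : H2 -> seq (H1' * H2).
(* ractp phi a = phi <| a, with <phi <| a, h> = <phi, a |> h> *)
Variable ractp : H1' -> H2 -> H1'.

Definition dcp_ract (phi : H1') (x : H1 * H2) : H1' :=
  \sum_(p <- cop D1' phi) pr p.1 x.1 *: ractp p.2 x.2.

Definition A1_mul (X Y : H1 * H2 * H1') : seq (H1 * H2 * H1') :=
  flatten [seq [seq (z.1, z.2, dcp_ract X.2 q.2 * Y.2)
               | z <- dcp_mul D1 D2 lt rt X.1 q.1]
          | q <- dcp_cop D1 D2 Y.1].

Definition bc_mul (X Y : H2 * H1') : seq (H2 * H1') :=
  [seq (X.1 * p.1, ractp X.2 p.2 * Y.2) | p <- cop D2 Y.1].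

Definition bc_cop (X : H2 * H1') : seq ((H2 * H1') * (H2 * H1')) :=
  flatten [seq flatten [seq [seq ((p.1, q.1 * r.1), (q.2, r.2)) | r <- cop D1' X.2]
                       | q <- beta p.2]
          | p <- cop D2 X.1].

Definition bc_act (X : H2 * H1') (h : H1) : H1 :=
  \sum_(p <- cop D1 h) pr X.2 p.2 *: lt X.1 p.1.

Definition A2_mul (X Y : H1 * H2 * H1') : seq (H1 * H2 * H1') :=
  flatten [seq [seq (X.1.1 * bc_act q.1 Y.1.1, z.1, z.2)
               | z <- bc_mul q.2 (Y.1.2, Y.2)]
          | q <- bc_cop (X.1.2, X.2)].

Definition A_mulL (s t : seq (H1 * H2 * H1')) : seq (H1 * H2 * H1') :=
  flatten [seq A1_mul x y | x <- s, y <- t].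

Definition hw_mul (x y : H1 * H1') : seq (H1 * H1') :=
  [seq (x.1 * p.1, pr q.1 p.2 *: (q.2 * y.2)) | p <- cop D1 y.1, q <- cop D1' x.2].

Definition iota_dcp (x : H1 * H2) : H1 * H2 * H1' := (x.1, x.2, 1).
Definition iota_bc (X : H2 * H1') : H1 * H2 * H1' := (1, X.1, X.2).
Definition iota_hw (x : H1 * H1') : H1 * H2 * H1' := (x.1, 1, x.2).
End Constructions.

End HopfDefs.

Arguments iota_dcp {K H1 H2 H1'} x.
Arguments iota_bc {K H1 H2 H1'} X.
Arguments iota_hw {K H1 H2 H1'} x.

(* Identities between formal sums in H1 (x) H2 (x) H1' are tested against an
   arbitrary trilinear form, which turns both sides into iterated Sweedler sums
   of scalars; these are matched using coassociativity and the axioms of the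
   matched pair and of the pairing.

   The products of A1 and A2 agree because the coaction dualises [rt]:
   a <| g = <a_(0), g> a_(1).  Writing phi <| (g (x) b) = <phi_(1), g> phi_(2) <| b
   and using coassociativity in g, both products become
     h (a_(1) |> g_(1)) (x) (a_(2) <| g_(2)) b_(1) (x) <phi_(1), g_(3)> (phi_(2) <| b_(2)) psi.

   Associativity is that of a cross product.  H1 >< H2 acts on H1 by
   (h (x) a) . g = h (a |> g), and phi <| x is the transpose of this action, so by
   nondegeneracy of the pairing (phi <| x) <| y = phi <| xy; since |> is an action
   by coalgebra maps, also (phi psi) <| x = (phi <| x_(1)) (psi <| x_(2)).  These two
   facts, associativity of H1 >< H2 and multiplicativity of its coproduct give the
   associativity of A.  The subalgebra statements are counit computations. *)

From HB Require Import structures.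
From mathcomp Require Import all_boot all_order all_algebra.
From mathcomp Require Import complex reals.
From mathcomp Require Import ring.
Set Implicit Arguments. Unset Strict Implicit. Unset Printing Implicit Defensive.
Import GRing.Theory.
Local Open Scope ring_scope.

Section Linear.
Variable K : fieldType.
Variables (U V : lmodType K).

Lemma linform0 (f : V -> K) : linform f -> f 0 = 0.
Proof.
move=> hf; have := hf 1 0 0; rewrite scaler0 addr0 mul1r => h.
by apply: (addrI (f 0)); rewrite addr0 -h.
Qed.

Lemma linformD (f : V -> K) u v : linform f -> f (u + v) = f u + f v.
Proof. by move=> hf; have := hf 1 u v; rewrite scale1r mul1r. Qed.

Lemma linformZ (f : V -> K) c u : linform f -> f (c *: u) = c * f u.
Proof. by move=> hf; rewrite -(addr0 (c *: u)) hf linform0 // addr0. Qed.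

Lemma linform_sum (f : V -> K) I (s : seq I) (F : I -> V) : linform f ->
  f (\sum_(i <- s) F i) = \sum_(i <- s) f (F i).
Proof.
move=> hf; elim: s => [|a s IH]; first by rewrite !big_nil linform0.
by rewrite !big_cons linformD // IH.
Qed.

Lemma linmap0 (L : U -> V) : linmap L -> L 0 = 0.
Proof.
move=> hL; have := hL 1 0 0; rewrite scaler0 addr0 scale1r => h.
by apply: (addrI (L 0)); rewrite addr0 -h.
Qed.

Lemma linmapD (L : U -> V) u v : linmap L -> L (u + v) = L u + L v.
Proof. by move=> hL; have := hL 1 u v; rewrite !scale1r. Qed.

Lemma linmapZ (L : U -> V) c u : linmap L -> L (c *: u) = c *: L u.
Proof. by move=> hL; rewrite -(addr0 (c *: u)) hL linmap0 // addr0. Qed.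

Lemma linmap_sum (L : U -> V) I (s : seq I) (F : I -> U) : linmap L ->
  L (\sum_(i <- s) F i) = \sum_(i <- s) L (F i).
Proof.
move=> hL; elim: s => [|a s IH]; first by rewrite !big_nil linmap0.
by rewrite !big_cons linmapD // IH.
Qed.

Lemma linform_ext (f g : U -> K) : f =1 g -> linform g -> linform f.
Proof. by move=> e hg c u v; rewrite !e. Qed.

Lemma linform_comp (f : V -> K) (L : U -> V) : linform f -> linmap L ->
  linform (fun u => f (L u)).
Proof. by move=> hf hL c u v; rewrite hL hf. Qed.

Lemma linform_big I (s : seq I) (F : I -> V -> K) :
  (forall i, linform (F i)) -> linform (fun u => \sum_(i <- s) F i u).
Proof.
move=> hF c u v; rewrite mulr_sumr -big_split /=.
by apply: eq_bigr => i _; rewrite hF.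
Qed.

Lemma linform_mulr (g : V -> K) c : linform g -> linform (fun u => g u * c).
Proof. by move=> hg a u v; rewrite hg mulrDl mulrA. Qed.

Lemma linform_mull (g : V -> K) c : linform g -> linform (fun u => c * g u).
Proof. by move=> hg a u v; rewrite hg mulrDr mulrCA. Qed.

Lemma linform_add (g h : V -> K) :
  linform g -> linform h -> linform (fun u => g u + h u).
Proof. by move=> hg hh a u v; rewrite hg hh mulrDr addrACA. Qed.

Lemma linmap_id : linmap (fun u : V => u).
Proof. by []. Qed.

Lemma linmap_scale (L : U -> V) c : linmap L -> linmap (fun u => c *: L u).
Proof. by move=> hL a u v; rewrite hL scalerDr !scalerA mulrC. Qed.

Lemma linmap_scale_form (g : U -> K) (v : V) :
  linform g -> linmap (fun u => g u *: v).
Proof. by move=> hg a u w; rewrite hg scalerDl scalerA. Qed.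

Lemma linmap_big I (s : seq I) (F : I -> U -> V) :
  (forall i, linmap (F i)) -> linmap (fun u => \sum_(i <- s) F i u).
Proof.
move=> hF c u v; rewrite scaler_sumr -big_split /=.
by apply: eq_bigr => i _; rewrite hF.
Qed.

Lemma linmap_add (L L' : U -> V) :
  linmap L -> linmap L' -> linmap (fun u => L u + L' u).
Proof. by move=> h h' a u v; rewrite h h' scalerDr addrACA. Qed.

Lemma linmap_mulr (A : algType K) (L : U -> A) w :
  linmap L -> linmap (fun u => L u * w).
Proof. by move=> hL c u v; rewrite hL mulrDl scalerAl. Qed.

Lemma linmap_mull (A : algType K) (L : U -> A) w :
  linmap L -> linmap (fun u => w * L u).
Proof. by move=> hL c u v; rewrite hL mulrDr scalerAr. Qed.

End Linear.

Section Multilinear.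
Variable K : fieldType.
Variables (U V W X : lmodType K).

Lemma bilinform_compl (f : V -> W -> K) (L : U -> V) w : bilinform f -> linmap L ->
  linform (fun u => f (L u) w).
Proof. by case=> hf _ hL c x y; rewrite hL hf. Qed.

Lemma bilinform_compr (f : V -> W -> K) (L : U -> W) v : bilinform f -> linmap L ->
  linform (fun u => f v (L u)).
Proof. by case=> _ hf hL c x y; rewrite hL hf. Qed.

Lemma trilinform_comp1 (f : V -> W -> X -> K) (L : U -> V) w x :
  trilinform f -> linmap L -> linform (fun u => f (L u) w x).
Proof. by case=> hf _ _ hL c y z; rewrite hL hf. Qed.

Lemma trilinform_comp2 (f : V -> W -> X -> K) (L : U -> W) v x :
  trilinform f -> linmap L -> linform (fun u => f v (L u) x).
Proof. by case=> _ hf _ hL c y z; rewrite hL hf. Qed.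

Lemma trilinform_comp3 (f : V -> W -> X -> K) (L : U -> X) v w :
  trilinform f -> linmap L -> linform (fun u => f v w (L u)).
Proof. by case=> _ _ hf hL c y z; rewrite hL hf. Qed.

Lemma bilin_pair_sum1 (G : V * W -> K) w I (s : seq I) (F : I -> V) :
  bilinform (fun c d => G (c, d)) ->
  G (\sum_(i <- s) F i, w) = \sum_(i <- s) G (F i, w).
Proof. by case=> hG _; apply: (linform_sum _ _ (hG w)). Qed.

Lemma bilin_pair_sum2 (G : V * W -> K) v I (s : seq I) (F : I -> W) :
  bilinform (fun c d => G (c, d)) ->
  G (v, \sum_(i <- s) F i) = \sum_(i <- s) G (v, F i).
Proof. by case=> _ hG; apply: (linform_sum _ _ (hG v)). Qed.

Section Trilinear.
Variables (f : V -> W -> X -> K) (hf : trilinform f).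

Lemma trilin_sum1 w x I (s : seq I) F :
  f (\sum_(i <- s) F i) w x = \sum_(i <- s) f (F i) w x.
Proof. by case: hf => h _ _; apply: (linform_sum _ _ (h w x)). Qed.

Lemma trilin_sum2 v x I (s : seq I) F :
  f v (\sum_(i <- s) F i) x = \sum_(i <- s) f v (F i) x.
Proof. by case: hf => _ h _; apply: (linform_sum _ _ (h v x)). Qed.

Lemma trilin_sum3 v w I (s : seq I) F :
  f v w (\sum_(i <- s) F i) = \sum_(i <- s) f v w (F i).
Proof. by case: hf => _ _ h; apply: (linform_sum _ _ (h v w)). Qed.

Lemma trilinZ1 c v w x : f (c *: v) w x = c * f v w x.
Proof. by case: hf => h _ _; apply: (linformZ _ _ (h w x)). Qed.

Lemma trilinZ2 c v w x : f v (c *: w) x = c * f v w x.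
Proof. by case: hf => _ h _; apply: (linformZ _ _ (h v x)). Qed.

Lemma trilinZ3 c v w x : f v w (c *: x) = c * f v w x.
Proof. by case: hf => _ _ h; apply: (linformZ _ _ (h v w)). Qed.

End Trilinear.

Lemma teq2_sum (s t : seq (V * W)) : teq2 s t ->
  forall G : V * W -> K, bilinform (fun a b => G (a, b)) ->
  \sum_(p <- s) G p = \sum_(p <- t) G p.
Proof.
move=> h G hG; have := h _ hG.
have E r : \sum_(p <- r) G (p.1, p.2) = \sum_(p <- r) G p by apply: eq_bigr => -[].
by rewrite !E.
Qed.

Lemma teq3_sum (s t : seq (V * W * X)) : teq3 s t ->
  forall G : V * W * X -> K, trilinform (fun a b c => G (a, b, c)) ->
  \sum_(p <- s) G p = \sum_(p <- t) G p.
Proof.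
move=> h G hG; have := h _ hG.
have E r : \sum_(p <- r) G (p.1.1, p.1.2, p.2) = \sum_(p <- r) G p.
  by apply: eq_bigr => -[[]].
by rewrite !E.
Qed.

End Multilinear.

Section HopfSums.
Variable K : fieldType.
Variables (H : algType K) (D : hopf_data K H).
Hypothesis hD : is_hopf D.

Lemma linform_sum_cop (U : lmodType K) (L : U -> H) (G : H * H -> K) :
  linmap L -> bilinform (fun a b => G (a, b)) ->
  linform (fun u => \sum_(p <- cop D (L u)) G p).
Proof.
move=> hL hG; apply: (linform_comp (f := fun x => \sum_(p <- cop D x) G p)) hL.
move=> c x y; rewrite (teq2_sum (cop_lin hD c x y) hG) big_cat /= big_map mulr_sumr.
by congr (_ + _); apply: eq_bigr => -[a b] _; case: hG => hG _; exact: linformZ c a (hG b).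
Qed.

Lemma linform_cou (U : lmodType K) (L : U -> H) :
  linmap L -> linform (fun u => cou D (L u)).
Proof. exact: linform_comp (cou_lin hD). Qed.

Lemma sum_cop1 (G : H * H -> K) : bilinform (fun a b => G (a, b)) ->
  \sum_(p <- cop D 1) G p = G (1, 1).
Proof. by move=> hG; rewrite (teq2_sum (cop_one hD) hG) big_seq1. Qed.

(* Coassociativity as a rewrite rule on iterated Sweedler sums.  The leg of p that
   is split again is not available to [F], hence the 0 placeholder; [sum_coassoc_r]
   is the mirror image. *)
Lemma sum_coassoc x (F : H * H -> H * H -> K) :
  (forall p q, F p q = F (p.1, 0) q) -> trilinform (fun a b c => F (a, 0) (b, c)) ->
  \sum_(p <- cop D x) \sum_(q <- cop D p.2) F p q =
  \sum_(p <- cop D x) \sum_(q <- cop D p.1) F (q.1, 0) (q.2, p.2).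
Proof.
move=> hF hG.
have := teq3_sum (coassoc hD x) (G := fun t => F (t.1.1, 0) (t.1.2, t.2)) hG.
rewrite !big_allpairs_dep /= => <-.
by apply: eq_bigr => p _; apply: eq_bigr => -[a b] _; rewrite hF.
Qed.

Lemma sum_coassoc_r x (F : H * H -> H * H -> K) :
  (forall q p, F q p = F q (0, p.2)) -> trilinform (fun a b c => F (a, b) (0, c)) ->
  \sum_(p <- cop D x) \sum_(q <- cop D p.1) F q p =
  \sum_(p <- cop D x) \sum_(q <- cop D p.2) F (p.1, q.1) (0, q.2).
Proof.
move=> hF hG.
have := teq3_sum (coassoc hD x) (G := fun t => F (t.1.1, t.1.2) (0, t.2)) hG.
rewrite !big_allpairs_dep /= => ->.
by apply: eq_bigr => p _; apply: eq_bigr => -[a b] _; rewrite hF.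
Qed.

Lemma mulr_counitl (x w : H) : x * w = \sum_(t <- cop D x) cou D t.1 *: (t.2 * w).
Proof.
rewrite -{1}(counitl hD x) mulr_suml; apply: eq_bigr => t _.
by rewrite scalerAl.
Qed.

Lemma mulr_counitr (w x : H) : w * x = \sum_(t <- cop D x) cou D t.2 *: (w * t.1).
Proof.
rewrite -{1}(counitr hD x) mulr_sumr; apply: eq_bigr => t _.
by rewrite scalerAr.
Qed.

Section TrilinearCounit.
Variables (U V : lmodType K).

Lemma trilin_counit1 (f : H -> U -> V -> K) (hf : trilinform f) x u v :
  f x u v = \sum_(p <- cop D x) cou D p.2 * f p.1 u v.
Proof.
rewrite -{1}(counitr hD x) (trilin_sum1 hf).
by apply: eq_bigr => p _; rewrite (trilinZ1 hf).
Qed.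

Lemma trilin_counit2 (f : U -> H -> V -> K) (hf : trilinform f) x u v :
  f u x v = \sum_(p <- cop D x) cou D p.2 * f u p.1 v.
Proof.
rewrite -{1}(counitr hD x) (trilin_sum2 hf).
by apply: eq_bigr => p _; rewrite (trilinZ2 hf).
Qed.

Lemma trilin_counit2' (f : U -> H -> V -> K) (hf : trilinform f) x u v :
  f u x v = \sum_(p <- cop D x) cou D p.1 * f u p.2 v.
Proof.
rewrite -{1}(counitl hD x) (trilin_sum2 hf).
by apply: eq_bigr => p _; rewrite (trilinZ2 hf).
Qed.

Lemma trilin_mulr_counit1 (f : H -> U -> V -> K) (hf : trilinform f) h x u v :
  f (h * x) u v = \sum_(p <- cop D x) cou D p.2 * f (h * p.1) u v.
Proof.
rewrite {1}(mulr_counitr h x) (trilin_sum1 hf).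
by apply: eq_bigr => p _; rewrite (trilinZ1 hf).
Qed.

End TrilinearCounit.
End HopfSums.

Section Embeddings.
Variables (K : fieldType) (H1 H2 H1' : algType K).

Lemma iota_dcp_inj (D1' : hopf_data K H1') (hD : is_hopf D1') (s t : seq (H1 * H2)) :
  teq3 (map (@iota_dcp K H1 H2 H1') s) (map iota_dcp t) -> teq2 s t.
Proof.
move=> eq_st f hf.
have e r : \sum_(p <- r) f p.1 p.2 = \sum_(p <- r) f p.1 p.2 * cou D1' 1.
  by apply: eq_bigr => p _; rewrite (cou_one hD) mulr1.
rewrite !e; have := eq_st (fun u v th => f u v * cou D1' th); rewrite !big_map /=.
apply; split=> *; [exact: linform_mulr (hf.1 _) | exact: linform_mulr (hf.2 _) |
                   exact: linform_mull (cou_lin hD)].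
Qed.

Lemma iota_bc_inj (D1 : hopf_data K H1) (hD : is_hopf D1) (s t : seq (H2 * H1')) :
  teq3 (map (@iota_bc K H1 H2 H1') s) (map iota_bc t) -> teq2 s t.
Proof.
move=> eq_st f hf.
have e r : \sum_(p <- r) f p.1 p.2 = \sum_(p <- r) cou D1 1 * f p.1 p.2.
  by apply: eq_bigr => p _; rewrite (cou_one hD) mul1r.
rewrite !e; have := eq_st (fun u v th => cou D1 u * f v th); rewrite !big_map /=.
apply; split=> *; [exact: linform_mulr (cou_lin hD) | exact: linform_mull (hf.1 _) |
                   exact: linform_mull (hf.2 _)].
Qed.

Lemma iota_hw_inj (D2 : hopf_data K H2) (hD : is_hopf D2) (s t : seq (H1 * H1')) :
  teq3 (map (@iota_hw K H1 H2 H1') s) (map iota_hw t) -> teq2 s t.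
Proof.
move=> eq_st f hf.
have e r : \sum_(p <- r) f p.1 p.2 = \sum_(p <- r) f p.1 p.2 * cou D2 1.
  by apply: eq_bigr => p _; rewrite (cou_one hD) mulr1.
rewrite !e; have := eq_st (fun u v th => f u th * cou D2 v); rewrite !big_map /=.
apply; split=> *; [exact: linform_mulr (hf.1 _) | exact: linform_mull (cou_lin hD) |
                   exact: linform_mulr (hf.2 _)].
Qed.

End Embeddings.

Section DoubleCrossProduct.
Variable K : fieldType.
Variables (H1 H2 H1' : algType K).
Variables (D1 : hopf_data K H1) (D2 : hopf_data K H2) (D1' : hopf_data K H1').
Hypotheses (hopf1 : is_hopf D1) (hopf2 : is_hopf D2) (hopf1' : is_hopf D1').
Variables (lt : H2 -> H1 -> H1) (rt : H2 -> H1 -> H2).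
Hypothesis mp : matched_pair D1 D2 lt rt.
Variable pr : H1' -> H1 -> K.
Hypotheses (hpr : hopf_pairing D1 D1' pr) (ndeg : nondeg_pairing pr).
Variable beta : H2 -> seq (H1' * H2).
Hypothesis hdual : forall a h, rt a h = \sum_(p <- beta a) pr p.1 h *: p.2.
Variable ractp : H1' -> H2 -> H1'.
Hypothesis hractp : forall phi a h, pr (ractp phi a) h = pr phi (lt a h).

Lemma linform_pr1 (U : lmodType K) (L : U -> H1') h :
  linmap L -> linform (fun u => pr (L u) h).
Proof. exact: bilinform_compl (pr_bilin hpr). Qed.

Lemma linform_pr2 (U : lmodType K) (L : U -> H1) phi :
  linmap L -> linform (fun u => pr phi (L u)).
Proof. exact: bilinform_compr (pr_bilin hpr). Qed.

Lemma prDl x y h : pr (x + y) h = pr x h + pr y h.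
Proof. by apply: (linformD _ _ ((pr_bilin hpr).1 h)). Qed.
Lemma prZl c x h : pr (c *: x) h = c * pr x h.
Proof. by apply: (linformZ _ _ ((pr_bilin hpr).1 h)). Qed.
Lemma pr_suml I (s : seq I) F h : pr (\sum_(i <- s) F i) h = \sum_(i <- s) pr (F i) h.
Proof. by apply: (linform_sum _ _ ((pr_bilin hpr).1 h)). Qed.
Lemma prDr x y phi : pr phi (x + y) = pr phi x + pr phi y.
Proof. by apply: (linformD _ _ ((pr_bilin hpr).2 phi)). Qed.
Lemma prZr c x phi : pr phi (c *: x) = c * pr phi x.
Proof. by apply: (linformZ _ _ ((pr_bilin hpr).2 phi)). Qed.
Lemma pr_sumr I (s : seq I) F phi : pr phi (\sum_(i <- s) F i) = \sum_(i <- s) pr phi (F i).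
Proof. by apply: (linform_sum _ _ ((pr_bilin hpr).2 phi)). Qed.

Lemma eq_by_pairing x y : (forall g, pr x g = pr y g) -> x = y.
Proof.
move=> h; apply/eqP; rewrite -subr_eq0; apply/eqP; apply: (ndeg.1) => g.
by rewrite -scaleN1r prDl prZl h mulN1r addrN.
Qed.

Lemma linmap_lt1 (U : lmodType K) (L : U -> H2) h : linmap L -> linmap (fun u => lt (L u) h).
Proof. by move=> hL c u v; rewrite hL (lt_linl mp). Qed.
Lemma linmap_lt2 (U : lmodType K) (L : U -> H1) a : linmap L -> linmap (fun u => lt a (L u)).
Proof. by move=> hL c u v; rewrite hL (lt_linr mp). Qed.
Lemma linmap_rt1 (U : lmodType K) (L : U -> H2) h : linmap L -> linmap (fun u => rt (L u) h).
Proof. by move=> hL c u v; rewrite hL (rt_linl mp). Qed.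
Lemma linmap_rt2 (U : lmodType K) (L : U -> H1) a : linmap L -> linmap (fun u => rt a (L u)).
Proof. by move=> hL c u v; rewrite hL (rt_linr mp). Qed.

Lemma linmap_ractp1 (U : lmodType K) (L : U -> H1') a :
  linmap L -> linmap (fun u => ractp (L u) a).
Proof.
move=> hL c u v; apply: eq_by_pairing => g.
by rewrite hractp hL prDl prZl prDl prZl !hractp.
Qed.
Lemma linmap_ractp2 (U : lmodType K) (L : U -> H2) phi :
  linmap L -> linmap (fun u => ractp phi (L u)).
Proof.
move=> hL c u v; apply: eq_by_pairing => g.
by rewrite hractp hL prDl prZl !hractp (lt_linl mp) prDr prZr.
Qed.

Local Notation M := (dcp_mul D1 D2 lt rt).
Local Notation C := (dcp_cop D1 D2).
Local Notation act := (dcp_ract D1' pr ractp).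

Lemma big_dcp_mul (V : zmodType) (x y : H1 * H2) (F : H1 * H2 -> V) :
  \sum_(w <- M x y) F w =
  \sum_(p <- cop D2 x.2) \sum_(q <- cop D1 y.1) F (x.1 * lt p.1 q.1, rt p.2 q.2 * y.2).
Proof. by rewrite /dcp_mul big_allpairs_dep. Qed.

Lemma big_dcp_cop (V : zmodType) (x : H1 * H2) (F : (H1 * H2) * (H1 * H2) -> V) :
  \sum_(q <- C x) F q =
  \sum_(p <- cop D1 x.1) \sum_(r <- cop D2 x.2) F ((p.1, r.1), (p.2, r.2)).
Proof. by rewrite /dcp_cop big_allpairs_dep. Qed.

Lemma pr_dcp_ract th (x : H1 * H2) g :
  pr (dcp_ract D1' pr ractp th x) g = pr th (x.1 * lt x.2 g).
Proof.
rewrite /dcp_ract pr_suml (pr_mulr hpr); apply: eq_bigr => p _.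
by rewrite prZl hractp.
Qed.

Lemma linmap_dcp_ract1 (U : lmodType K) (L : U -> H1') x :
  linmap L -> linmap (fun u => dcp_ract D1' pr ractp (L u) x).
Proof.
move=> hL c u v; apply: eq_by_pairing => g.
by rewrite pr_dcp_ract hL prDl prZl prDl prZl !pr_dcp_ract.
Qed.
Lemma linmap_dcp_ract2 (U : lmodType K) (L : U -> H1) th a :
  linmap L -> linmap (fun u => dcp_ract D1' pr ractp th (L u, a)).
Proof.
move=> hL c u v; apply: eq_by_pairing => g.
by rewrite pr_dcp_ract prDl prZl !pr_dcp_ract /= hL mulrDl prDr -scalerAl prZr.
Qed.
Lemma linmap_dcp_ract3 (U : lmodType K) (L : U -> H2) th h :
  linmap L -> linmap (fun u => dcp_ract D1' pr ractp th (h, L u)).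
Proof.
move=> hL c u v; apply: eq_by_pairing => g.
rewrite pr_dcp_ract prDl prZl !pr_dcp_ract /= hL (lt_linl mp).
by rewrite mulrDr prDr -scalerAr prZr.
Qed.

Definition quadlinform (G : (H1 * H2) * (H1 * H2) -> K) :=
  [/\ forall b c d, linform (fun a => G ((a, b), (c, d))),
      forall a c d, linform (fun b => G ((a, b), (c, d))),
      forall a b d, linform (fun c => G ((a, b), (c, d))) &
      forall a b c, linform (fun d => G ((a, b), (c, d)))].

Lemma quadlinform_comp1 (U : lmodType K) G (L : U -> H1) b c d : quadlinform G -> linmap L ->
  linform (fun u => G ((L u, b), (c, d))).
Proof. by case=> h _ _ _ hL; apply: (linform_comp (h b c d) hL). Qed.
Lemma quadlinform_comp2 (U : lmodType K) G (L : U -> H2) a c d : quadlinform G -> linmap L ->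
  linform (fun u => G ((a, L u), (c, d))).
Proof. by case=> _ h _ _ hL; apply: (linform_comp (h a c d) hL). Qed.
Lemma quadlinform_comp3 (U : lmodType K) G (L : U -> H1) a b d : quadlinform G -> linmap L ->
  linform (fun u => G ((a, b), (L u, d))).
Proof. by case=> _ _ h _ hL; apply: (linform_comp (h a b d) hL). Qed.
Lemma quadlinform_comp4 (U : lmodType K) G (L : U -> H2) a b c : quadlinform G -> linmap L ->
  linform (fun u => G ((a, b), (c, L u))).
Proof. by case=> _ _ _ h hL; apply: (linform_comp (h a b c) hL). Qed.


Arguments linform : simpl never.
Arguments linmap : simpl never.

Ltac not_lam t := lazymatch t with | fun _ => _ => fail | _ => idtac end.

(* Discharges the multilinearity side conditions created when a Sweedler-sum
   identity is instantiated with a concrete summand. *)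
Ltac lin :=
  match goal with
  | H : linmap ?L |- linmap ?L => exact H
  | H : linmap ?L |- linmap (fun u => ?L u) => exact H
  | H : linform ?L |- linform ?L => exact H
  | H : linform ?L |- linform (fun u => ?L u) => exact H
  | |- linmap ?L => not_lam L; change (linmap (fun u => L u)); lin
  | |- linform ?L => not_lam L; change (linform (fun u => L u)); lin
  | |- trilinform _ => split => ? ? /=; lin
  | |- bilinform _ => split => ? /=; lin
  | |- forall _, _ => move=> ? /=; lin
  | |- linform (fun u => \sum_(i <- ?s) @?F u i) => apply: (linform_big s); lin
  | |- linform (fun u => \sum_(i <- cop ?D (@?L u)) @?G i) =>
      first [ apply: (linform_sum_cop hopf1) | apply: (linform_sum_cop hopf2)
            | apply: (linform_sum_cop hopf1') ]; lin
  | |- linform (fun u => @?g u * ?c) => apply: linform_mulr; lin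
  | |- linform (fun u => ?c * @?g u) => apply: linform_mull; lin
  | |- linform (fun u => @?g u + @?h u) => apply: linform_add; lin
  | |- linform (fun u => pr (@?L u) ?h) => apply: linform_pr1; lin
  | |- linform (fun u => pr ?phi (@?L u)) => apply: linform_pr2; lin
  | |- linform (fun u => cou ?D (@?L u)) =>
      first [ apply: (linform_cou hopf1) | apply: (linform_cou hopf2)
            | apply: (linform_cou hopf1') ]; lin
  | H : trilinform ?f |- linform (fun u => ?f (@?L u) ?y ?z) =>
      apply: (trilinform_comp1 y z H); lin
  | H : trilinform ?f |- linform (fun u => ?f ?x (@?L u) ?z) =>
      apply: (trilinform_comp2 x z H); lin
  | H : trilinform ?f |- linform (fun u => ?f ?x ?y (@?L u)) =>
      apply: (trilinform_comp3 x y H); lin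
  | H : bilinform ?f |- linform (fun u => ?f (@?L u) ?y) => apply: (bilinform_compl y H); lin
  | H : bilinform ?f |- linform (fun u => ?f ?x (@?L u)) => apply: (bilinform_compr x H); lin
  | H : linform ?f |- linform (fun u => ?f (@?L u)) => apply: (linform_comp H); lin
  | |- linmap (fun u => u) => exact: linmap_id
  | |- linmap (fun u => \sum_(i <- ?s) @?F u i) => apply: (linmap_big s); lin
  | |- linmap (fun u => @?L u * ?w) => apply: linmap_mulr; lin
  | |- linmap (fun u => ?w * @?L u) => apply: linmap_mull; lin
  | |- linmap (fun u => ?c *: @?L u) => apply: linmap_scale; lin
  | |- linmap (fun u => @?g u *: ?v) => apply: linmap_scale_form; lin
  | |- linmap (fun u => @?L u + @?L' u) => apply: linmap_add; lin
  | |- linmap (fun u => lt (@?L u) ?h) => apply: linmap_lt1; lin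
  | |- linmap (fun u => lt ?a (@?L u)) => apply: linmap_lt2; lin
  | |- linmap (fun u => rt (@?L u) ?h) => apply: linmap_rt1; lin
  | |- linmap (fun u => rt ?a (@?L u)) => apply: linmap_rt2; lin
  | |- linmap (fun u => ractp (@?L u) ?a) => apply: linmap_ractp1; lin
  | |- linmap (fun u => ractp ?a (@?L u)) => apply: linmap_ractp2; lin
  | |- linmap (fun u => dcp_ract D1' pr ractp (@?L u) ?x) => apply: linmap_dcp_ract1; lin
  | |- linmap (fun u => dcp_ract D1' pr ractp ?th (@?L u, ?a)) => apply: linmap_dcp_ract2; lin
  | |- linmap (fun u => dcp_ract D1' pr ractp ?th (?h, @?L u)) => apply: linmap_dcp_ract3; lin
  | H : bilinform (fun c d => ?G (c, d)) |- linform (fun u => ?G (@?L u, ?y)) =>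
      apply: (bilinform_compl y H); lin
  | H : bilinform (fun c d => ?G (c, d)) |- linform (fun u => ?G (?x, @?L u)) =>
      apply: (bilinform_compr x H); lin
  | H : quadlinform ?G |- linform (fun u => ?G ((@?L u, ?b), (?c, ?d))) =>
      apply: (quadlinform_comp1 b c d H); lin
  | H : quadlinform ?G |- linform (fun u => ?G ((?a, @?L u), (?c, ?d))) =>
      apply: (quadlinform_comp2 a c d H); lin
  | H : quadlinform ?G |- linform (fun u => ?G ((?a, ?b), (@?L u, ?d))) =>
      apply: (quadlinform_comp3 a b d H); lin
  | H : quadlinform ?G |- linform (fun u => ?G ((?a, ?b), (?c, @?L u))) =>
      apply: (quadlinform_comp4 a b c H); lin
  | |- quadlinform _ => rewrite /quadlinform; split; lin
  | |- linform (fun u => \sum_(w <- dcp_mul D1 D2 lt rt _ _) _) =>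
      eapply linform_ext; [move=> ?; rewrite big_dcp_mul /=; reflexivity | lin]
  | |- linform (fun u => \sum_(w <- dcp_cop D1 D2 _) _) =>
      eapply linform_ext; [move=> ?; rewrite big_dcp_cop /=; reflexivity | lin]
  end.

Ltac lhs_of G := lazymatch G with
  | @eq _ ?l _ => l
  | Under_rel.Under_rel _ _ ?l _ => l end.

Ltac onlhs tac := lazymatch goal with
  | |- @eq _ _ ?R => let r := fresh "rhs" in set r := R; tac; subst r
  | _ => tac end.

(* [pull_sum r] moves the sum over the range [r] to the outside of the left-hand
   side by exchanging it with the sums enclosing it; [match_sums] peels off the
   sums of the right-hand side one by one, pulling the same sum out on the left. *)
Ltac pull_sum r :=
  lazymatch goal with |- ?G =>
  let l := lhs_of G in
  lazymatch l with
  | \big[_/_]_(i <- r) _ => idtac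
  | \big[_/_]_(i <- _) _ =>
      onlhs ltac:(under eq_bigr => ? _ do (pull_sum r));
      onlhs ltac:(rewrite exchange_big)
  end end.

Ltac under_sums tac :=
  onlhs ltac:(under eq_bigr => ? _ do (first [progress tac | under_sums tac])).

Ltac coassoc_sum hop D x :=
  pull_sum (cop D x);
  under eq_bigr => ? _ do (match goal with v : _ * _ |- _ => pull_sum (cop D v.2) end);
  rewrite (sum_coassoc hop) /=; [ | by move=> [? ?] [? ?] | by lin ].

Ltac match_sums :=
  lazymatch goal with
  | |- _ = \big[_/_]_(i <- ?r) _ => pull_sum r; apply: eq_bigr => ? _; match_sums
  | _ => idtac
  end.

(* Normalises x_(1)(1) (x) x_(1)(2) (x) x_(2)(1) (x) x_(2)(2) to a right-nested
   fourfold coproduct. *)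
Ltac coassoc_mid hop D x :=
  pull_sum (cop D x);
  under eq_bigr => ? _ do (match goal with v : _ * _ |- _ => pull_sum (cop D v.1) end);
  rewrite (sum_coassoc_r hop) /=; [ | by move=> [? ?] [? ?] | by lin ];
  under eq_bigr => ? _ do (under eq_bigr => ? _ do
      (match goal with v : _ * _ |- _ => pull_sum (cop D v.2) end));
  under eq_bigr => ? _ do (rewrite (sum_coassoc hop) /=; [ | by move=> [? ?] [? ?] | by lin ]).

Lemma sum_cop_mul_lt g a k (G : H1 * H1 -> K) : bilinform (fun u v => G (u, v)) ->
  \sum_(t <- cop D1 (g * lt a k)) G t =
  \sum_(q <- cop D1 g) \sum_(p <- cop D2 a) \sum_(r <- cop D1 k)
     G (q.1 * lt p.1 r.1, q.2 * lt p.2 r.2).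
Proof.
move=> hG; rewrite (teq2_sum (cop_mul hopf1 _ _) hG) big_allpairs_dep.
apply: eq_bigr => q _.
rewrite (teq2_sum (lt_cop mp _ _) (G := fun t => G (q.1 * t.1, q.2 * t.2))); last by lin.
by rewrite big_allpairs_dep.
Qed.

Lemma sum_cop_rt_mul a g b (G : H2 * H2 -> K) : bilinform (fun u v => G (u, v)) ->
  \sum_(t <- cop D2 (rt a g * b)) G t =
  \sum_(p <- cop D2 a) \sum_(q <- cop D1 g) \sum_(e <- cop D2 b)
     G (rt p.1 q.1 * e.1, rt p.2 q.2 * e.2).
Proof.
move=> hG; rewrite (teq2_sum (cop_mul hopf2 _ _) hG) big_allpairs_dep.
rewrite (teq2_sum (rt_cop mp _ _)
  (G := fun t => \sum_(e <- cop D2 b) G (t.1 * e.1, t.2 * e.2))); last by lin.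
by rewrite big_allpairs_dep.
Qed.

Lemma dcp_mul_lt (x y : H1 * H2) g :
  \sum_(m <- M x y) m.1 * lt m.2 g = x.1 * lt x.2 (y.1 * lt y.2 g).
Proof.
rewrite big_dcp_mul /= (mp_lt_mul mp) mulr_sumr; apply: eq_bigr => p _.
rewrite mulr_sumr; apply: eq_bigr => q _.
by rewrite (lt_mul mp) mulrA.
Qed.

Lemma dcp_ract_mul phi (x y : H1 * H2) :
  act (act phi x) y = \sum_(m <- M x y) act phi m.
Proof.
apply: eq_by_pairing => g; rewrite !pr_dcp_ract pr_suml.
under eq_bigr => m _ do rewrite pr_dcp_ract.
by rewrite -pr_sumr dcp_mul_lt.
Qed.

Lemma dcp_ractM th chi (x : H1 * H2) :
  act (th * chi) x = \sum_(s <- C x) act th s.1 * act chi s.2.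
Proof.
apply: eq_by_pairing => g; rewrite pr_dcp_ract (pr_mull hpr) pr_suml.
rewrite sum_cop_mul_lt; last by lin.
rewrite big_dcp_cop; apply: eq_bigr => p _; apply: eq_bigr => r _.
by rewrite (pr_mull hpr); apply: eq_bigr => t _; rewrite !pr_dcp_ract.
Qed.

Lemma dcp_ract1 (x : H1 * H2) : act 1 x = (cou D1 x.1 * cou D2 x.2) *: 1.
Proof.
apply: eq_by_pairing => g; rewrite pr_dcp_ract prZl !(pr_onel hpr) (cou_mul hopf1) (lt_cou mp).
by rewrite !mulrA.
Qed.

Lemma dcp_ract_id phi : act phi (1, 1) = phi.
Proof. by apply: eq_by_pairing => g; rewrite pr_dcp_ract /= (lt_one mp) mul1r. Qed.

Lemma dcp_ract_H2 phi (b : H2) : act phi (1, b) = ractp phi b.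
Proof. by apply: eq_by_pairing => g; rewrite pr_dcp_ract /= mul1r hractp. Qed.

Lemma ractp1 phi : ractp phi 1 = phi.
Proof. by apply: eq_by_pairing => g; rewrite hractp (lt_one mp). Qed.

Lemma dcp_mulA (x y z : H1 * H2) (G : H1 * H2 -> K) : bilinform (fun c d => G (c, d)) ->
  \sum_(w <- M x y) \sum_(w' <- M w z) G w' = \sum_(v <- M y z) \sum_(w' <- M x v) G w'.
Proof.
move=> hG; case: x => h a; case: y => g b; case: z => k c.
rewrite big_dcp_mul /=.
under eq_bigr => p _ do under eq_bigr => s _ do rewrite big_dcp_mul /=.
under_sums ltac:(rewrite sum_cop_rt_mul /=; last by lin).
under_sums ltac:(rewrite (lt_mul mp)).
under_sums ltac:(rewrite (mp_rt_mul mp) mulr_suml (bilin_pair_sum2 _ _ _ hG)).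
under_sums ltac:(rewrite mulr_suml (bilin_pair_sum2 _ _ _ hG)).
under_sums ltac:(rewrite -(rt_mul mp)).
coassoc_sum hopf2 D2 a. coassoc_sum hopf1 D1 g. coassoc_sum hopf2 D2 b. coassoc_sum hopf1 D1 k.
symmetry; rewrite big_dcp_mul /=.
under_sums ltac:(rewrite big_dcp_mul /=).
under_sums ltac:(rewrite sum_cop_mul_lt /=; last by lin).
under_sums ltac:(rewrite (mp_lt_mul mp) mulr_sumr (bilin_pair_sum1 _ _ _ hG)).
under_sums ltac:(rewrite mulr_sumr (bilin_pair_sum1 _ _ _ hG)).
symmetry.
match_sums.
by rewrite !mulrA.
Qed.

Lemma sum_cocomm a' g' (Phi : H2 * H1 -> K) : bilinform (fun x y => Phi (x, y)) ->
  \sum_(t <- cop D2 a') \sum_(t' <- cop D1 g') Phi (rt t.1 t'.1, lt t.2 t'.2) =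
  \sum_(t <- cop D2 a') \sum_(t' <- cop D1 g') Phi (rt t.2 t'.2, lt t.1 t'.1).
Proof.
move=> hP.
have := teq2_sum (mp_cocomm mp a' g') hP.
by rewrite !big_allpairs_dep.
Qed.

Lemma dcp_copM (y z : H1 * H2) (G : (H1 * H2) * (H1 * H2) -> K) : quadlinform G ->
  \sum_(v <- M y z) \sum_(q <- C v) G q =
  \sum_(q <- C y) \sum_(s <- C z) \sum_(v1 <- M q.1 s.1) \sum_(v2 <- M q.2 s.2) G (v1, v2).
Proof.
move=> hG; case: y => g b; case: z => k c.
rewrite big_dcp_mul /=.
under_sums ltac:(rewrite big_dcp_cop /=).
under_sums ltac:(rewrite sum_cop_mul_lt /=; last by lin).
under_sums ltac:(rewrite sum_cop_rt_mul /=; last by lin).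
coassoc_mid hopf2 D2 b. coassoc_mid hopf1 D1 k.
symmetry.
rewrite big_dcp_cop /=.
under_sums ltac:(rewrite big_dcp_cop /=).
under_sums ltac:(rewrite big_dcp_mul /=).
under_sums ltac:(rewrite big_dcp_mul /=).
coassoc_mid hopf2 D2 b. coassoc_mid hopf1 D1 k.
(* The two sides now differ by the cocommutativity axiom of the matched pair. *)
under eq_bigr => i _.
  under eq_bigr => p _.
    pull_sum (cop D2 b).
    under eq_bigr => i0 _.
      pull_sum (cop D2 i0.2).
      under eq_bigr => i1 _.
        pull_sum (cop D2 i1.1).
        under eq_bigr => i2 _.
          pull_sum (cop D1 p.1).
          over.
        rewrite (sum_cocomm _ _ (Phi := fun w => \sum_(i3 <- cop D1 g) \sum_(i4 <- cop D2 c)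
            G ((i3.1 * lt i0.1 i.1, w.1 * i4.1), (i3.2 * w.2, rt i1.2 p.2 * i4.2))));
          last by lin.
        over.
      over.
    over.
  over.
rewrite /=.
by match_sums.
Qed.

Local Notation A1 := (A1_mul D1 D2 D1' lt rt pr ractp).
Local Notation A2 := (A2_mul D1 D2 D1' lt pr beta ractp).
Local Notation AL := (A_mulL D1 D2 D1' lt rt pr ractp).

Lemma big_A1_mul (V : zmodType) X Y (F : H1 * H2 * H1' -> V) :
  \sum_(w <- A1 X Y) F w =
  \sum_(q <- C Y.1) \sum_(z <- M X.1 q.1) F (z.1, z.2, act X.2 q.2 * Y.2).
Proof.
rewrite /A1_mul big_flatten /= big_map; apply: eq_bigr => q _.
by rewrite big_map.
Qed.

Lemma big_A_mulL (V : zmodType) s t (F : H1 * H2 * H1' -> V) :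
  \sum_(w <- AL s t) F w = \sum_(x <- s) \sum_(y <- t) \sum_(w <- A1 x y) F w.
Proof. by rewrite /A_mulL big_flatten /= big_allpairs_dep. Qed.

Lemma A1_mulA X Y Z : teq3 (AL (A1 X Y) [:: Z]) (AL [:: X] (A1 Y Z)).
Proof.
move=> f hf; rewrite !big_A_mulL big_seq1.
under eq_bigr => u _ do rewrite big_seq1.
case: X => [[h a] phi]; case: Y => [[g b] psi]; case: Z => [[k c] chi] /=.
rewrite big_A1_mul /=.
under_sums ltac:(rewrite big_A1_mul /=).
under_sums ltac:(rewrite -surjective_pairing).
symmetry.
rewrite big_A1_mul /=.
under_sums ltac:(rewrite big_A1_mul /=).
under_sums ltac:(rewrite -surjective_pairing).
under eq_bigr => r _.
  rewrite dcp_copM /=; last by lin.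
  under eq_bigr => q _.
    under eq_bigr => s _.
      under eq_bigr => v1 _ do rewrite exchange_big.
      rewrite -dcp_mulA; last by lin.
      over.
    over.
  over.
rewrite /=.
symmetry.
under_sums ltac:(rewrite dcp_ractM mulr_suml (trilin_sum3 hf)).
under_sums ltac:(rewrite dcp_ract_mul !mulr_suml (trilin_sum3 hf)).
rewrite big_dcp_cop /=; repeat (under_sums ltac:(rewrite big_dcp_cop /=)).
coassoc_sum hopf1 D1 k. coassoc_sum hopf2 D2 c.
symmetry.
rewrite big_dcp_cop /=; repeat (under_sums ltac:(rewrite big_dcp_cop /=)).
symmetry.
match_sums.
by rewrite mulrA.
Qed.

Lemma A1_mul1l X : teq3 (A1 (1, 1, 1) X) [:: X].
Proof.
move=> f hf; case: X => [[g b] psi] /=; rewrite big_seq1 big_A1_mul /= big_dcp_cop /=.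
under_sums ltac:(rewrite big_dcp_mul /=).
under_sums ltac:(rewrite (sum_cop1 hopf2) /=; last by lin).
under_sums ltac:(rewrite mul1r (lt_one mp) (mp_rt_one mp) dcp_ract1 /= -!scalerAl !mul1r
   (trilinZ2 hf) (trilinZ3 hf)).
symmetry.
rewrite (trilin_counit1 hopf1 hf g).
under [X in X = _]eq_bigr => i _ do rewrite (trilin_counit1 hopf1 hf i.1) mulr_sumr.
under_sums ltac:(rewrite (trilin_counit2 hopf2 hf b) mulr_sumr).
under_sums ltac:(rewrite mulr_sumr).
match_sums.
ring.
Qed.

Lemma A1_mul1r X : teq3 (A1 X (1, 1, 1)) [:: X].
Proof.
move=> f hf; case: X => [[h a] phi] /=; rewrite big_seq1 big_A1_mul /= big_dcp_cop /=.
rewrite (sum_cop1 hopf1) /=; last by lin.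
rewrite (sum_cop1 hopf2) /=; last by lin.
rewrite big_dcp_mul /=.
under_sums ltac:(rewrite (sum_cop1 hopf1) /=; last by lin).
under_sums ltac:(rewrite (mp_lt_one mp) (rt_one mp) dcp_ract_id !mulr1).
under_sums ltac:(rewrite -scalerAr mulr1 (trilinZ1 hf)).
by rewrite (trilin_counit2' hopf2 hf a).
Qed.

Lemma big_bc_cop (V : zmodType) (X : H2 * H1') (F : (H2 * H1') * (H2 * H1') -> V) :
  \sum_(w <- bc_cop D2 D1' beta X) F w =
  \sum_(p <- cop D2 X.1) \sum_(q <- beta p.2) \sum_(r <- cop D1' X.2)
     F ((p.1, q.1 * r.1), (q.2, r.2)).
Proof.
rewrite /bc_cop big_flatten /= big_map; apply: eq_bigr => p _.
rewrite big_flatten /= big_map; apply: eq_bigr => q _.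
by rewrite big_map.
Qed.

Lemma big_bc_mul (V : zmodType) (X Y : H2 * H1') (F : H2 * H1' -> V) :
  \sum_(w <- bc_mul D2 ractp X Y) F w =
  \sum_(p <- cop D2 Y.1) F (X.1 * p.1, ractp X.2 p.2 * Y.2).
Proof. by rewrite /bc_mul big_map. Qed.

Lemma big_A2_mul (V : zmodType) X Y (F : H1 * H2 * H1' -> V) :
  \sum_(w <- A2 X Y) F w =
  \sum_(q <- bc_cop D2 D1' beta (X.1.2, X.2))
     \sum_(z <- bc_mul D2 ractp q.2 (Y.1.2, Y.2))
        F (X.1.1 * bc_act D1 lt pr q.1 Y.1.1, z.1, z.2).
Proof.
rewrite /A2_mul big_flatten /= big_map; apply: eq_bigr => q _.
by rewrite big_map.
Qed.

Lemma A1_mul_eq_A2 X Y : teq3 (A1 X Y) (A2 X Y).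
Proof.
move=> f hf.
case: X => [[h a] phi]; case: Y => [[g b] psi] /=.
rewrite big_A1_mul big_A2_mul /= big_dcp_cop /=.
under_sums ltac:(rewrite big_dcp_mul /=).
symmetry.
rewrite big_bc_cop /=.
under_sums ltac:(rewrite big_bc_mul /=).
under_sums ltac:(rewrite /bc_act /= mulr_sumr (trilin_sum1 hf)).
under_sums ltac:(rewrite -scalerAr (trilinZ1 hf) (pr_mull hpr) mulr_suml).
coassoc_sum hopf1 D1 g.
symmetry.
under_sums ltac:(rewrite hdual mulr_suml (trilin_sum2 hf)).
under_sums ltac:(rewrite -scalerAl (trilinZ2 hf) /dcp_ract).
under_sums ltac:(rewrite mulr_suml (trilin_sum3 hf) mulr_sumr).
under_sums ltac:(rewrite -scalerAl (trilinZ3 hf)).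
match_sums.
by rewrite /= mulrA.
Qed.

Local Notation i_dcp := (@iota_dcp K H1 H2 H1').
Local Notation i_bc := (@iota_bc K H1 H2 H1').
Local Notation i_hw := (@iota_hw K H1 H2 H1').

Lemma rt_counit a x : rt a x = \sum_(t <- cop D1 x) cou D1 t.2 *: rt a t.1.
Proof.
rewrite -{1}(counitr hopf1 x) (linmap_sum _ _ (linmap_rt2 a (@linmap_id _ _))).
by apply: eq_bigr => t _; rewrite (linmapZ _ _ (linmap_rt2 a (@linmap_id _ _))).
Qed.

Lemma A1_mul_iota_dcp x y : teq3 (A1 (i_dcp x) (i_dcp y)) (map i_dcp (M x y)).
Proof.
move=> f hf; case: x => h a; case: y => g b.
rewrite big_A1_mul /= big_map /= big_dcp_cop /=.
under_sums ltac:(rewrite dcp_ract1 mulr1 (trilinZ3 hf)).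
under_sums ltac:(rewrite big_dcp_mul /=).
symmetry.
rewrite big_dcp_mul /=.
under_sums ltac:(rewrite rt_counit mulr_suml (trilin_sum2 hf)).
under_sums ltac:(rewrite -scalerAl (trilinZ2 hf)).
coassoc_sum hopf1 D1 g.
under_sums ltac:(rewrite (mulr_counitr hopf2) (trilin_sum2 hf) mulr_sumr).
under_sums ltac:(rewrite (trilinZ2 hf)).
match_sums.
by rewrite mulrA.
Qed.

Lemma A1_mul_iota_bc X Y : teq3 (A1 (i_bc X) (i_bc Y)) (map i_bc (bc_mul D2 ractp X Y)).
Proof.
move=> f hf; case: X => a phi; case: Y => b psi.
rewrite big_A1_mul /= big_map /= big_dcp_cop /=.
rewrite (sum_cop1 hopf1) /=; last by lin.
under_sums ltac:(rewrite big_dcp_mul /=).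
under_sums ltac:(rewrite (sum_cop1 hopf1) /=; last by lin).
under_sums ltac:(rewrite (mp_lt_one mp) (rt_one mp) dcp_ract_H2 mul1r (trilinZ1 hf)).
symmetry.
rewrite big_bc_mul /=.
under_sums ltac:(rewrite (mulr_counitl hopf2) (trilin_sum2 hf)).
under_sums ltac:(rewrite (trilinZ2 hf)).
by match_sums.
Qed.

Lemma A1_mul_iota_hw x y : teq3 (A1 (i_hw x) (i_hw y)) (map i_hw (hw_mul D1 D1' pr x y)).
Proof.
move=> f hf; case: x => h phi; case: y => g psi.
rewrite big_A1_mul /= big_map /= big_dcp_cop /=.
under_sums ltac:(rewrite (sum_cop1 hopf2) /=; last by lin).
under_sums ltac:(rewrite big_dcp_mul /=).
under_sums ltac:(rewrite (sum_cop1 hopf2) /=; last by lin).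
under_sums ltac:(rewrite (lt_one mp) (mp_rt_one mp) mulr1 (trilinZ2 hf)).
under_sums ltac:(rewrite /dcp_ract /= mulr_suml (trilin_sum3 hf) mulr_sumr).
under_sums ltac:(rewrite ractp1 -scalerAl (trilinZ3 hf)).
symmetry.
rewrite /hw_mul big_allpairs_dep /=.
under_sums ltac:(rewrite (trilinZ3 hf) (trilin_mulr_counit1 hopf1 hf) mulr_sumr).
match_sums.
by rewrite mulrCA.
Qed.

End DoubleCrossProduct.

Theorem mainTheorem1 (R : realType)
  (H1 H2 H1' : algType R[i])
  (D1 : hopf_data R[i] H1) (D2 : hopf_data R[i] H2) (D1' : hopf_data R[i] H1')
  (hopf1 : is_hopf D1) (hopf2 : is_hopf D2) (hopf1' : is_hopf D1')
  (lt : H2 -> H1 -> H1) (rt : H2 -> H1 -> H2)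
  (mp : matched_pair D1 D2 lt rt)
  (pr : H1' -> H1 -> R[i])
  (hpr : hopf_pairing D1 D1' pr) (ndeg : nondeg_pairing pr)
  (beta : H2 -> seq (H1' * H2))
  (hbeta : left_coaction D1' beta)
  (hdual : forall a h, rt a h = \sum_(p <- beta a) pr p.1 h *: p.2)
  (ractp : H1' -> H2 -> H1')
  (hractp : forall phi a h, pr (ractp phi a) h = pr phi (lt a h)) :
  let A1 := A1_mul D1 D2 D1' lt rt pr ractp in
  let A2 := A2_mul D1 D2 D1' lt pr beta ractp in
  let AL := A_mulL D1 D2 D1' lt rt pr ractp in
  let i_dcp := @iota_dcp _ H1 H2 H1' in
  let i_bc := @iota_bc _ H1 H2 H1' in
  let i_hw := @iota_hw _ H1 H2 H1' in
  (forall X Y, teq3 (A1 X Y) (A2 X Y)) /\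
  (forall X Y Z, teq3 (AL (A1 X Y) [:: Z]) (AL [:: X] (A1 Y Z))) /\
  (forall X, teq3 (A1 (1, 1, 1) X) [:: X] /\ teq3 (A1 X (1, 1, 1)) [:: X]) /\
  (forall x y, teq3 (A1 (i_dcp x) (i_dcp y))
                    (map i_dcp (dcp_mul D1 D2 lt rt x y))) /\
  (forall s t : seq (H1 * H2),
     teq3 (map i_dcp s) (map i_dcp t) -> teq2 s t) /\
  (forall X Y, teq3 (A1 (i_bc X) (i_bc Y))
                    (map i_bc (bc_mul D2 ractp X Y))) /\
  (forall s t : seq (H2 * H1'),
     teq3 (map i_bc s) (map i_bc t) -> teq2 s t) /\
  (forall x y, teq3 (A1 (i_hw x) (i_hw y))
                    (map (i_hw) (hw_mul D1 D1' pr x y))) /\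
  (forall s t : seq (H1 * H1'),
     teq3 (map (i_hw) s) (map (i_hw) t) -> teq2 s t).
Proof.
move=> A1 A2 AL i_dcp i_bc i_hw.
split; first exact: A1_mul_eq_A2.
split; first exact: A1_mulA.
split; first by move=> X; split; [exact: A1_mul1l | exact: A1_mul1r].
split; first exact: A1_mul_iota_dcp.
split; first exact: iota_dcp_inj hopf1'.
split; first exact: A1_mul_iota_bc.
split; first exact: iota_bc_inj hopf1.
split; first exact: A1_mul_iota_hw.
exact: iota_hw_inj hopf2.
Qed.
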